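(* Let $\mu$ be an atomic probability measure on $\mathbb{R}$ consisting of exactly $m$ distinct atoms and let $\nu$ be an atomic probability measure consisting of exactly $n$ distinct atoms. Then $\mu\rhd\nu$ is an atomic probability measure consisting of exactly $mn$ distinct atoms.
   Context: For a probability measure $\mu$ on $\mathbb{R}$, $G_\mu(z)=\int\frac{1}{z-x}d\mu(x)$ on $\mathbb{C}^+$ and $H_\mu=1/G_\mu$. The monotone convolution $\mu\rhd\nu$ is the unique probability measure with $H_{\mu\rhd\nu}=H_\mu\circ H_\nu$ on $\mathbb{C}^+$. An atomic probability measure with $m$ distinct atoms is of the form $\sum_{k=1}^m\lambda_k\delta_{a_k}$ with $\lambda_k>0$ and distinct $a_k$. *)

From HB Require Import structures.
From mathcomp Require Import all_boot all_order all_algebra.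
From mathcomp Require Import all_classical all_reals all_analysis.
From mathcomp Require Import complex.
Set Implicit Arguments. Unset Strict Implicit. Unset Printing Implicit Defensive.
Import Order.TTheory GRing.Theory Num.Theory.
Import numFieldNormedType.Exports.
Local Open Scope classical_set_scope.
Local Open Scope ring_scope.
Local Open Scope complex_scope.

(* Cauchy transform G_mu(z) = \int 1/(z - x) dmu(x), a complex integral,
   i.e. (\int Re(1/(z-x)) dmu) + i (\int Im(1/(z-x)) dmu). *)
Definition cauchy_transform (R : realType) (mu : probability R R) (z : R[i])
  : R[i] :=
  ((Rintegral mu setT (fun x : R => complex.Re ((z - x%:C)^-1)))%:C
   + 'i%C * (Rintegral mu setT (fun x : R => complex.Im ((z - x%:C)^-1)))%:C).

Definition H_transform (R : realType) (mu : probability R R) (z : R[i]) : R[i] :=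
  (cauchy_transform mu z)^-1.

Definition is_monotone_convolution (R : realType) (mu nu rho : probability R R)
  : Prop :=
  forall z : R[i], 0 < complex.Im z -> H_transform rho z = H_transform mu (H_transform nu z).

Definition atomic_with (R : realType) (mu : probability R R) (m : nat) : Prop :=
  exists (a : 'I_m -> R) (lam : 'I_m -> R),
    injective a /\ (forall k, 0 < lam k) /\
    (forall A : set R, measurable A ->
       mu A = (\sum_(k < m) (lam k)%:E * \d_(a k) A)%E).

From HB Require Import structures.
From mathcomp Require Import all_boot all_order all_algebra all_field.
From mathcomp Require Import all_classical all_reals all_analysis.
From mathcomp Require Import measurable_realfun complex ring.
Set Implicit Arguments. Unset Strict Implicit. Unset Printing Implicit Defensive.
Import Order.TTheory GRing.Theory Num.Theory.
Import numFieldNormedType.Exports.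
Local Open Scope classical_set_scope.
Local Open Scope ring_scope.
Local Open Scope complex_scope.
Local Notation Re := complex.Re.
Local Notation Im := complex.Im.

(* For nu = sum_j p_j delta_(d_j), the Cauchy transform is G_nu = P / Q with
   Q = prod_j (X - d_j) and P = sum_j p_j prod_(i != j) (X - d_i).  For a real,
   1 / (H_nu - a) = P / (Q - a P), and Q - a P is monic of degree n with n distinct
   real roots: they are real since G_nu is not real off the real axis, and simple
   since the Wronskian P Q' - Q P' = sum_j p_j (Q / (X - d_j))^2 is positive.  So
   G_(mu |> nu) = G_mu o H_nu = sum_k lam_k / (H_nu - a_k) is a sum of m n simple
   fractions with distinct real poles (a root of Q - a P determines a).  Letting the
   Poisson kernel concentrate recovers the masses of mu |> nu from its Cauchy
   transform, so mu |> nu is the corresponding atomic measure. *)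

Section PartialFractions.
Variables (F : fieldType) (n : nat) (d : 'I_n -> F).

Definition nodal : {poly F} := \prod_(i < n) ('X - (d i)%:P).
Definition nodal_but (j : 'I_n) : {poly F} := \prod_(i < n | i != j) ('X - (d i)%:P).
Definition pfrac_num (p : 'I_n -> F) : {poly F} := \sum_(j < n) p j *: nodal_but j.

Lemma nodal_split j : nodal = ('X - (d j)%:P) * nodal_but j.
Proof. by rewrite /nodal (bigD1 j). Qed.

Lemma monic_nodal : nodal \is monic.
Proof. exact: monic_prod_XsubC. Qed.

Lemma size_nodal : size nodal = n.+1.
Proof. by rewrite size_prod_XsubC /index_enum -enumT size_enum_ord. Qed.

Lemma monic_nodal_but j : nodal_but j \is monic.
Proof. exact: monic_prod_XsubC. Qed.

Lemma size_nodal_but j : size (nodal_but j) = n.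
Proof.
have := size_nodal; rewrite (nodal_split j) mulrC size_Mmonic ?monicXsubC //.
  by rewrite size_XsubC addn2 => -[].
by rewrite monic_neq0 ?monic_nodal_but.
Qed.

Lemma horner_nodal_neq0 z : (forall j, z != d j) -> nodal.[z] != 0.
Proof.
by move=> zd; rewrite horner_prod; apply/prodf_neq0 => i _; rewrite !hornerE subr_eq0.
Qed.

Lemma horner_nodal_but_neq0 j z : (forall i, z != d i) -> (nodal_but j).[z] != 0.
Proof.
by move=> zd; rewrite horner_prod; apply/prodf_neq0 => i _; rewrite !hornerE subr_eq0.
Qed.

Lemma root_nodal z : root nodal z -> exists j, z = d j.
Proof.
rewrite /root horner_prod => /prodf_eq0 [j _].
by rewrite !hornerE subr_eq0 => /eqP ->; exists j.
Qed.

Lemma horner_nodal_but_node i k : i != k -> (nodal_but i).[d k] = 0.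
Proof.
move=> ik; rewrite horner_prod (bigD1 k) 1?eq_sym //=.
by rewrite !hornerE subrr mul0r.
Qed.

Lemma horner_pfrac_num_node p k : (pfrac_num p).[d k] = p k * (nodal_but k).[d k].
Proof.
rewrite horner_sum (bigD1 k) //= big1 ?addr0; first by rewrite hornerE.
by move=> i ik; rewrite hornerE horner_nodal_but_node ?mulr0.
Qed.

Lemma size_pfrac_num p : (size (pfrac_num p) <= n)%N.
Proof.
apply: (leq_trans (size_sum _ _ _)); apply/bigmax_leqP => j _.
by apply: (leq_trans (size_scale_leq _ _)); rewrite size_nodal_but.
Qed.

Lemma coef_pfrac_num p : (pfrac_num p)`_n.-1 = \sum_j p j.
Proof.
rewrite coef_sum; apply: eq_bigr => j _; rewrite coefZ.
by have /monicP := monic_nodal_but j; rewrite /lead_coef size_nodal_but => ->; rewrite mulr1.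
Qed.

Lemma pfrac_numE p z : (forall j, z != d j) ->
  \sum_j p j / (z - d j) = (pfrac_num p).[z] / nodal.[z].
Proof.
move=> zd; rewrite horner_sum mulr_suml; apply: eq_bigr => j _.
rewrite hornerE (nodal_split j) hornerM !hornerE.
have zdj : z - d j != 0 by rewrite subr_eq0.
have Qj0 := horner_nodal_but_neq0 j zd.
by field; rewrite zdj Qj0.
Qed.

Lemma pfrac_wronskian p :
  pfrac_num p * nodal^`() - nodal * (pfrac_num p)^`() = \sum_j p j *: nodal_but j ^+ 2.
Proof.
rewrite /pfrac_num raddf_sum mulr_suml mulr_sumr -sumrB; apply: eq_bigr => j _.
rewrite [X in nodal * X]derivZ -scalerAl -scalerAr -scalerBr; congr (_ *: _).
by rewrite (nodal_split j) derivM derivXsubC mul1r; ring.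
Qed.

Hypothesis d_inj : injective d.

Lemma horner_nodal_but_self_neq0 i : (nodal_but i).[d i] != 0.
Proof.
rewrite horner_prod; apply/prodf_neq0 => k ki; rewrite !hornerE subr_eq0.
by apply: contra ki => /eqP /d_inj ->.
Qed.

Lemma pfrac_num_interp (q : {poly F}) : (size q <= n)%N ->
  q = pfrac_num (fun i => q.[d i] / (nodal_but i).[d i]).
Proof.
move=> sq; set w := fun i => _; apply/eqP; rewrite -subr_eq0; apply/negPn/negP => D0.
have := max_poly_roots D0 (rs := map d (enum 'I_n)).
rewrite map_inj_uniq // enum_uniq size_map size_enum_ord ltnNge.
have -> : all (root (q - pfrac_num w)) [seq d i | i <- enum 'I_n].
  apply/allP => x /mapP [k _ ->]; rewrite /root hornerD hornerN horner_pfrac_num_node.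
  by rewrite /w divfK ?subrr // horner_nodal_but_self_neq0.
move=> /(_ isT isT) /negP; apply; apply: (leq_trans (size_polyD _ _)).
by rewrite size_polyN geq_max sq size_pfrac_num.
Qed.

End PartialFractions.

Section MapPartialFractions.
Variables (F K : fieldType) (f : {rmorphism F -> K}) (n : nat) (d : 'I_n -> F).

Lemma map_nodal : map_poly f (nodal d) = nodal (f \o d).
Proof. by rewrite rmorph_prod; apply: eq_bigr => i _; exact: map_polyXsubC. Qed.

Lemma map_nodal_but j : map_poly f (nodal_but d j) = nodal_but (f \o d) j.
Proof. by rewrite rmorph_prod; apply: eq_bigr => i _; exact: map_polyXsubC. Qed.

Lemma map_pfrac_num p : map_poly f (pfrac_num d p) = pfrac_num (f \o d) (f \o p).
Proof. by rewrite rmorph_sum; apply: eq_bigr => j _; rewrite /= map_polyZ map_nodal_but. Qed.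

End MapPartialFractions.

Section RealPolynomials.
Variable R : rcfType.

Lemma real_rooted_nodal (q : {poly R}) n : q \is monic -> size q = n.+1 ->
  (forall z : R[i], root (map_poly (real_complex R) q) z -> Im z = 0) ->
  (forall x, root q x -> q^`().[x] != 0) ->
  exists2 b : 'I_n -> R, injective b & q = nodal b.
Proof.
move=> q_monic sq q_real q_simple; set f := real_complex R.
have [r qE] := closed_field_poly_normal (map_poly f q).
rewrite lead_coef_map (monicP q_monic) rmorph1 scale1r in qE.
have sr : size r = n by have := size_map_poly f q; rewrite qE size_prod_XsubC sq => -[].
have r_real z : z \in r -> Im z = 0.
  by move=> zr; apply: q_real; rewrite qE root_prod_XsubC.
have r_uniq : uniq r.
  rewrite -separable_prod_XsubC -qE unlock; apply/Pdiv.ClosedField.coprimepP.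
  move=> z qz; have := r_real z; rewrite -root_prod_XsubC -qE => /(_ qz).
  case: z qz => x y qz /= y0; rewrite {y}y0 in qz *.
  rewrite -[x +i* 0]/(f x) deriv_map horner_map fmorph_eq0 q_simple //.
  by rewrite -(fmorph_root f).
pose b (i : 'I_n) := Re r`_i.
have bE i : (b i)%:C = r`_i.
  by have := r_real r`_i; rewrite mem_nth ?sr // /b; case: r`_i => x y /= ->.
exists b => [i j /(congr1 f)|].
  by rewrite /f !bE => /eqP; rewrite nth_uniq ?sr // => /eqP /val_inj.
apply: (@map_poly_inj _ _ f); rewrite map_nodal qE (big_nth 0) big_mkord sr.
by apply: eq_bigr => i _; rewrite /= bE.
Qed.

End RealPolynomials.

Section CauchyAtoms.
Variable R : rcfType.

Definition cauchy_atoms (T : finType) (a c : T -> R) (z : R[i]) : R[i] :=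
  \sum_x (c x)%:C / (z - (a x)%:C).

Lemma Re_kernel (z : R[i]) x :
  Re ((z - x%:C)^-1) = (Re z - x) / ((Re z - x) ^+ 2 + Im z ^+ 2).
Proof. by case: z => u v /=; rewrite oppr0 addr0. Qed.

Lemma Im_kernel (z : R[i]) x :
  Im ((z - x%:C)^-1) = - Im z / ((Re z - x) ^+ 2 + Im z ^+ 2).
Proof. by case: z => u v /=; rewrite oppr0 addr0 mulNr. Qed.

Lemma sqr_add_sqr_gt0 (x y : R) : y != 0 -> 0 < x ^+ 2 + y ^+ 2.
Proof. by move=> y0; rewrite ltr_pwDr ?sqr_ge0 ?exprn_even_gt0. Qed.

Lemma Im_cauchy_atoms (T : finType) (a c : T -> R) z :
  Im (cauchy_atoms a c z) = - Im z * \sum_x c x / ((Re z - a x) ^+ 2 + Im z ^+ 2).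
Proof.
rewrite (raddf_sum (@complex.Im R : Rcomplex R -> R)) mulr_sumr; apply: eq_bigr => x _.
transitivity (c x * Im ((z - (a x)%:C)^-1)); last by rewrite Im_kernel; ring.
by case: (_^-1) => u v /=; rewrite mul0r addr0.
Qed.

Lemma Im_cauchy_atoms_neq0 (T : finType) (a c : T -> R) (x0 : T) z :
  (forall x, 0 < c x) -> Im z != 0 -> Im (cauchy_atoms a c z) != 0.
Proof.
move=> c_gt0 z0; rewrite Im_cauchy_atoms mulf_neq0 ?oppr_eq0 // gt_eqF //.
rewrite (bigD1 x0) //= ltr_pwDl ?divr_gt0 ?sqr_add_sqr_gt0 //.
by apply: sumr_ge0 => x _; rewrite ltW ?divr_gt0 ?sqr_add_sqr_gt0.
Qed.

Lemma Im_inv_neq0 (w : R[i]) : Im w != 0 -> Im w^-1 != 0.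
Proof.
case: w => u v /= v0.
by rewrite oppr_eq0 mulf_neq0 // invr_eq0 gt_eqF // sqr_add_sqr_gt0.
Qed.

Lemma cauchy_atoms_pfrac n (a c : 'I_n -> R) z : Im z != 0 ->
  cauchy_atoms a c z =
  (map_poly (real_complex R) (pfrac_num a c)).[z] / (map_poly (real_complex R) (nodal a)).[z].
Proof.
move=> z0; rewrite map_pfrac_num map_nodal -pfrac_numE // => j.
by apply: contra z0 => /eqP ->.
Qed.

End CauchyAtoms.

Section ShiftedReciprocal.
Variables (R : rcfType) (n : nat) (d p : 'I_n -> R).
Hypotheses (n_gt0 : (0 < n)%N) (d_inj : injective d) (p_gt0 : forall j, 0 < p j).

Local Notation P := (pfrac_num d p).
Local Notation Q := (nodal d).
Local Notation toC := (map_poly (real_complex R)).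

Lemma pfrac_wronskian_gt0 x : 0 < P.[x] * Q^`().[x] - Q.[x] * P^`().[x].
Proof.
have -> : P.[x] * Q^`().[x] - Q.[x] * P^`().[x] = (P * Q^`() - Q * P^`()).[x].
  by rewrite !hornerE.
rewrite pfrac_wronskian horner_sum.
have [j Qj0] : exists j, (nodal_but d j).[x] != 0.
  have [/existsP [j /eqP ->]|x_node] := boolP [exists j, x == d j].
    by exists j; apply: horner_nodal_but_self_neq0.
  exists (Ordinal n_gt0); apply: horner_nodal_but_neq0 => i.
  by apply: contraNneq x_node => ->; apply/existsP; exists i.
rewrite (bigD1 j) //=; apply: ltr_pwDl.
  by rewrite hornerZ hornerE mulr_gt0 ?exprn_even_gt0.
by apply: sumr_ge0 => i _; rewrite hornerZ hornerE mulr_ge0 ?sqr_ge0 // ltW.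
Qed.

Section Shift.
Variable a : R.

Local Notation S := (Q - a *: P).

Lemma size_shift : size S = n.+1.
Proof.
rewrite size_polyDl size_nodal // size_polyN ltnS.
by rewrite (leq_trans (size_scale_leq _ _)) ?size_pfrac_num.
Qed.

Lemma monic_shift : S \is monic.
Proof.
apply/monicP; rewrite lead_coefDl ?(monicP (monic_nodal d)) //.
by rewrite size_polyN size_nodal ltnS (leq_trans (size_scale_leq _ _)) ?size_pfrac_num.
Qed.

(* At a non-real root [z], [cauchy_atoms d p z = P(z) / Q(z) = 1 / a] would be real. *)
Lemma Im_root_shift z : root (toC S) z -> Im z = 0.
Proof.
apply: contraTeq => z0; have z_node j : z != (d j)%:C by apply: contra z0 => /eqP ->.
have Qz0 : (toC Q).[z] != 0 by rewrite map_nodal horner_nodal_neq0.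
have := Im_cauchy_atoms_neq0 d (Ordinal n_gt0) p_gt0 z0.
rewrite cauchy_atoms_pfrac // /root rmorphB /= map_polyZ !hornerE.
apply: contra; rewrite subr_eq0 => /eqP QaP.
have a0 : a != 0 by apply: contraNneq Qz0 => a0; rewrite QaP a0 rmorph0 mul0r.
have Pz0 : (toC P).[z] != 0 by apply: contraNneq Qz0 => P0; rewrite QaP P0 mulr0.
by rewrite QaP invfM mulrCA divff // mulr1 -rmorphV ?unitfE.
Qed.

Lemma pfrac_num_root_shift_neq0 x : root S x -> P.[x] != 0.
Proof.
rewrite /root !hornerE subr_eq0 => /eqP QaP; apply/eqP => Px0.
have [j xj] : exists j, x = d j by apply: root_nodal; rewrite /root QaP Px0 mulr0.
move: Px0; rewrite xj horner_pfrac_num_node => /eqP.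
by rewrite mulf_eq0 (negbTE (horner_nodal_but_self_neq0 d_inj j)) orbF gt_eqF.
Qed.

Lemma shift_root_simple x : root S x -> S^`().[x] != 0.
Proof.
move=> Sx; have := pfrac_wronskian_gt0 x; move: Sx.
rewrite /root derivB derivZ !hornerE subr_eq0 => /eqP ->.
have -> : P.[x] * Q^`().[x] - a * P.[x] * P^`().[x] = P.[x] * (Q^`().[x] - a * P^`().[x]).
  by ring.
by apply: contraTneq => ->; rewrite mulr0 ltxx.
Qed.

End Shift.

Lemma root_shift_inj x a1 a2 : root (Q - a1 *: P) x -> root (Q - a2 *: P) x -> a1 = a2.
Proof.
move=> r1 /[dup] r2 /pfrac_num_root_shift_neq0 Px0; move: r1 r2.
by rewrite /root !hornerE !subr_eq0 => /eqP -> /eqP /(mulIf Px0).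
Qed.

Lemma shifted_reciprocal_cauchy_atoms (a : R) :
  exists b w : 'I_n -> R, [/\ injective b, (forall i, w i != 0), \sum_i w i = \sum_j p j,
    (forall i, root (Q - a *: P) (b i)) &
    forall z : R[i], Im z != 0 -> ((cauchy_atoms d p z)^-1 - a%:C)^-1 = cauchy_atoms b w z].
Proof.
have [b b_inj SE] := real_rooted_nodal (monic_shift a) (size_shift a)
  (@Im_root_shift a) (@shift_root_simple a).
pose w i := P.[b i] / (nodal_but b i).[b i].
have PE : P = pfrac_num b w := pfrac_num_interp b_inj (size_pfrac_num d p).
have Sb i : root (Q - a *: P) (b i).
  by rewrite SE /root (nodal_split b i) hornerM hornerXsubC subrr mul0r.
exists b, w; split => // [i||z z0].
- by rewrite mulf_neq0 ?invr_eq0 ?horner_nodal_but_self_neq0 ?(pfrac_num_root_shift_neq0 (Sb i)).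
- by rewrite -(coef_pfrac_num b) -PE coef_pfrac_num.
have node_free (c : 'I_n -> R) j : z != (c j)%:C by apply: contra z0 => /eqP ->.
have Qz0 : (toC Q).[z] != 0 by rewrite map_nodal; apply/horner_nodal_neq0/node_free.
have Sz0 : (toC (nodal b)).[z] != 0 by rewrite map_nodal; apply/horner_nodal_neq0/node_free.
have Pz0 : (toC P).[z] != 0.
  apply: contraNneq (Im_cauchy_atoms_neq0 d (Ordinal n_gt0) p_gt0 z0) => P0.
  by rewrite cauchy_atoms_pfrac // P0 mul0r.
rewrite !cauchy_atoms_pfrac // -PE -SE.
move: Sz0; rewrite -SE rmorphB /= map_polyZ !hornerE => Sz0.
by field; rewrite Pz0 Qz0 Sz0.
Qed.

End ShiftedReciprocal.

Section Composition.
Variables (R : rcfType) (m n : nat) (a lam : 'I_m -> R) (d p : 'I_n -> R).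
Hypotheses (n_gt0 : (0 < n)%N) (a_inj : injective a) (lam_neq0 : forall k, lam k != 0).
Hypotheses (d_inj : injective d) (p_gt0 : forall j, 0 < p j).

Lemma cauchy_atoms_comp : exists beta c : 'I_m * 'I_n -> R,
  [/\ injective beta, (forall x, c x != 0), \sum_x c x = (\sum_k lam k) * \sum_j p j &
    forall z : R[i], Im z != 0 ->
      cauchy_atoms a lam (cauchy_atoms d p z)^-1 = cauchy_atoms beta c z].
Proof.
have shift k : exists bw : ('I_n -> R) * ('I_n -> R),
  [/\ injective bw.1, (forall i, bw.2 i != 0), \sum_i bw.2 i = \sum_j p j,
    (forall i, root (nodal d - a k *: pfrac_num d p) (bw.1 i)) &
    forall z : R[i], Im z != 0 ->
      ((cauchy_atoms d p z)^-1 - (a k)%:C)^-1 = cauchy_atoms bw.1 bw.2 z].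
  have [b [w bwP]] := shifted_reciprocal_cauchy_atoms n_gt0 d_inj p_gt0 (a k).
  by exists (b, w).
have [bw bwP] := fin_all_exists shift.
exists (fun x => (bw x.1).1 x.2), (fun x => lam x.1 * (bw x.1).2 x.2); split.
- move=> [k1 i1] [k2 i2] /= b12.
  have [b1_inj _ _ r1 _] := bwP k1; have [_ _ _ r2 _] := bwP k2.
  have k12 : k1 = k2.
    by apply/a_inj/(root_shift_inj d_inj p_gt0 (r1 i1)); rewrite b12.
  by subst k2; rewrite (b1_inj _ _ b12).
- by move=> [k i]; have [_ w_neq0 _ _ _] := bwP k; rewrite mulf_neq0.
- rewrite -(pair_bigA _ (fun k i => lam k * (bw k).2 i)) mulr_suml /=.
  apply: eq_bigr => k _.
  by have [_ _ <- _ _] := bwP k; rewrite mulr_sumr.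
move=> z z0; rewrite /cauchy_atoms.
rewrite -(pair_bigA _ (fun k i => (lam k * (bw k).2 i)%:C / (z - ((bw k).1 i)%:C))) /=.
apply: eq_bigr => k _.
have [_ _ _ _ -> //] := bwP k; rewrite /cauchy_atoms mulr_sumr; apply: eq_bigr => i _.
by rewrite mulrA -rmorphM.
Qed.

End Composition.

Section DiracSums.
Variable R : realType.

Definition is_dirac_sum (mu : measure R R) m (a lam : 'I_m -> R) : Prop :=
  forall A, measurable A -> mu A = (\sum_(k < m) (lam k)%:E * \d_(a k) A)%E.

Lemma ge0_integral_dirac_sum (mu : measure R R) m (a lam : 'I_m -> R) :
  (forall k, 0 <= lam k) -> is_dirac_sum mu a lam ->
  forall g : R -> \bar R, (forall x, (0 <= g x)%E) -> measurable_fun setT g ->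
  (\int[mu]_x g x = \sum_(k < m) (lam k)%:E * g (a k))%E.
Proof.
move=> lam_ge0 muE g g_ge0 mg.
(* [msum] adds up a [nat]-indexed family of measures: pad with zero weights. *)
pose lamN k : R := if @insub _ _ 'I_m k is Some i then lam i else 0.
have lamN_ge0 k : 0 <= lamN k by rewrite /lamN; case: insub.
pose aN k : R := if @insub _ _ 'I_m k is Some i then a i else 0.
pose muN : (measure R R)^nat := fun k => mscale (NngNum (lamN_ge0 k)) \d_(aN k).
have insubE (k : 'I_m) : @insub _ _ 'I_m k = Some k by rewrite valK.
have muNE k A : muN k A = ((lamN k)%:E * \d_(aN k) A)%E by [].
rewrite (eq_measure_integral (msum muN m)); last first.
  move=> A mA _; rewrite muE //= /msum; apply: eq_bigr => k _.
  by rewrite muNE /lamN /aN insubE.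
rewrite ge0_integral_measure_sum //; apply: eq_bigr => k _.
by rewrite ge0_integral_mscale //= integral_dirac // diracT mul1e /lamN /aN insubE.
Qed.

Lemma Rintegral_dirac_sum (mu : measure R R) m (a lam : 'I_m -> R) :
  (forall k, 0 <= lam k) -> is_dirac_sum mu a lam ->
  forall f : R -> R, measurable_fun setT f ->
  Rintegral mu setT f = \sum_(k < m) lam k * f (a k).
Proof.
move=> lam_ge0 muE f mf; have mEf : measurable_fun setT (EFin \o f) by apply/measurable_EFinP.
rewrite /Rintegral integralE.
rewrite (ge0_integral_dirac_sum lam_ge0 muE (@funepos_ge0 _ _ _) (measurable_funepos mEf)).
rewrite (ge0_integral_dirac_sum lam_ge0 muE (@funeneg_ge0 _ _ _) (measurable_funeneg mEf)).
have sumE (h : R -> R) :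
    (\sum_(k < m) (lam k)%:E * (h (a k))%:E)%E = (\sum_(k < m) lam k * h (a k))%:E.
  by rewrite -sumEFin; apply: eq_bigr => k _; rewrite EFinM.
rewrite (eq_bigr _ (fun k _ => congr1 _ (funeposE _ _))).
rewrite (eq_bigr _ (fun k _ => congr1 _ (funenegE _ _))) /=.
rewrite -!(eq_bigr _ (fun k _ => congr1 _ (EFin_max _ _))).
rewrite (sumE (fun x => Num.max (f x) 0)) (sumE (fun x => Num.max (- f x) 0)) -EFinB -sumrB /=.
apply: eq_bigr => k _; rewrite -mulrBr -[Num.max (- _) 0]opprK oppr_max !opprK oppr0.
by rewrite addrC addr_min_max addr0.
Qed.

Lemma dirac_sum_weights (mu : probability R R) m (a lam : 'I_m -> R) :
  is_dirac_sum mu a lam -> \sum_k lam k = 1.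
Proof.
move=> muE; have := etrans (esym (probability_setT mu)) (muE setT measurableT).
by under eq_bigr do rewrite diracT mule1; rewrite sumEFin => -[].
Qed.

Lemma continuous_lorentz (c e : R) : e != 0 ->
  continuous (fun x : R => ((c - x) ^+ 2 + e ^+ 2)^-1).
Proof.
move=> e0 x; apply: cvgV; first by rewrite gt_eqF ?sqr_add_sqr_gt0.
apply: cvgD; last exact: cvg_cst.
by under eq_fun do rewrite expr2; apply: cvgM; apply: cvgB; try exact: cvg_cst; exact: cvg_id.
Qed.

Lemma measurable_Re_kernel (z : R[i]) : Im z != 0 ->
  measurable_fun setT (fun x : R => Re ((z - x%:C)^-1)).
Proof.
move=> z0; rewrite (funext (Re_kernel z)); apply: continuous_measurable_fun => x.
by apply: cvgM; [apply: cvgB; [exact: cvg_cst | exact: cvg_id] | exact: continuous_lorentz].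
Qed.

Lemma measurable_Im_kernel (z : R[i]) : Im z != 0 ->
  measurable_fun setT (fun x : R => Im ((z - x%:C)^-1)).
Proof.
move=> z0; rewrite (funext (Im_kernel z)); apply: continuous_measurable_fun => x.
by apply: cvgM; [exact: cvg_cst | exact: continuous_lorentz].
Qed.

Lemma cauchy_transform_dirac_sum (mu : probability R R) m (a lam : 'I_m -> R) :
  (forall k, 0 <= lam k) -> is_dirac_sum mu a lam ->
  forall z, Im z != 0 -> cauchy_transform mu z = cauchy_atoms a lam z.
Proof.
move=> lam_ge0 muE z z0; rewrite /cauchy_transform.
rewrite (Rintegral_dirac_sum lam_ge0 muE (measurable_Re_kernel z0)).
rewrite (Rintegral_dirac_sum lam_ge0 muE (measurable_Im_kernel z0)).
rewrite !rmorph_sum mulr_sumr -big_split; apply: eq_bigr => k _ /=.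
by rewrite !rmorphM /= mulrCA -mulrDr -complexE.
Qed.

End DiracSums.

Section AtomRecovery.
Variable R : realType.

(* [pi e] times the Poisson kernel of the upper half-plane at [t + i e]: it is [1] at [t] *)
(* and tends to the indicator of [t] as [e -> 0]. *)
Definition peak (e t x : R) : R := e ^+ 2 / ((t - x) ^+ 2 + e ^+ 2).

Lemma peak_ge0 e t x : 0 <= peak e t x.
Proof. by rewrite divr_ge0 ?addr_ge0 ?sqr_ge0. Qed.

Lemma peak_le1 e t x : e != 0 -> peak e t x <= 1.
Proof. by move=> e0; rewrite ler_pdivrMr ?sqr_add_sqr_gt0 // mul1r lerDr sqr_ge0. Qed.

Lemma continuous_peak e t : e != 0 -> continuous (peak e t).
Proof. by move=> e0 x; apply: cvgM; [exact: cvg_cst | exact: continuous_lorentz]. Qed.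

Lemma peak_Im_kernel e t x : peak e t x = - e * Im ((t +i* e - x%:C)^-1).
Proof. by rewrite Im_kernel /peak /=; ring. Qed.

Lemma cvg_peak t x : peak (harmonic n) t x @[n --> \oo] --> ((x == t)%:R : R).
Proof.
have [->|xt] := eqVneq x t.
  have peak1 n : peak (harmonic n) t t = 1.
    by rewrite /peak subrr expr0n add0r divff // sqrf_eq0 gt_eqF ?harmonic_gt0.
  by under eq_cvg do rewrite peak1; exact: cvg_cst.
have -> : (false%:R : R) = peak 0 t x by rewrite /peak expr0n mul0r.
have cont0 : {for 0, continuous (fun e => peak e t x)}.
  apply: cvgM; first by under eq_fun do rewrite expr2; apply: cvgM; exact: cvg_id.
  apply: cvgV; first by rewrite expr0n addr0 sqrf_eq0 subr_eq0 eq_sym.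
  apply: cvgD; first exact: cvg_cst.
  by under eq_fun do rewrite expr2; apply: cvgM; exact: cvg_id.
exact: cvg_comp _ _ cvg_harmonic cont0.
Qed.

Lemma measurable_peak e t : e != 0 -> measurable_fun setT (EFin \o peak e t).
Proof.
by move=> e0; apply/measurable_EFinP; apply: continuous_measurable_fun; exact: continuous_peak.
Qed.

Lemma integrable_peak (rho : probability R R) e t : e != 0 ->
  rho.-integrable setT (EFin \o peak e t).
Proof.
move=> e0; apply: (@le_integrable _ _ _ _ _ measurableT _ (EFin \o cst 1)).
- exact: measurable_peak.
- by move=> x _ /=; rewrite lee_fin normr1 ger0_norm ?peak_ge0 ?peak_le1.
- exact: finite_measure_integrable_cst.
Qed.

Lemma Im_cauchy_transform (mu : probability R R) z :
  Im (cauchy_transform mu z) = Rintegral mu setT (fun x => Im ((z - x%:C)^-1)).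
Proof.
rewrite /cauchy_transform; set I := Rintegral mu setT (fun x => Im _).
by rewrite /= mul0r mul1r !add0r.
Qed.

Lemma Rintegral_peak (rho : probability R R) e t : e != 0 ->
  Rintegral rho setT (peak e t) = - e * Im (cauchy_transform rho (t +i* e)).
Proof.
move=> e0; rewrite Im_cauchy_transform (eq_Rintegral _
  (f := fun x => Im ((t +i* e - x%:C)^-1)) (g := fun x => (- e)^-1 * peak e t x)).
  by rewrite [X in _ = _ * X]RintegralZl ?integrable_peak // mulrA mulrV ?unitfE ?oppr_eq0 // mul1r.
by move=> x _; rewrite peak_Im_kernel mulrA mulVf ?oppr_eq0 // mul1r.
Qed.

Lemma cvg_Rintegral_peak (rho : probability R R) t :
  Rintegral rho setT (peak (harmonic n) t) @[n --> \oo] --> fine (rho [set t]).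
Proof.
have harmonic_neq0 n : harmonic n != 0 :> R by rewrite gt_eqF ?harmonic_gt0.
pose f x := (\1_[set t] x : R)%:E.
have mf : measurable_fun setT f.
  by apply/measurable_EFinP/measurable_indic; exact: measurable_set1.
have f_lim : (\forall x \ae rho, setT x ->
    (EFin \o peak (harmonic n) t) x @[n --> \oo] --> f x)%classic.
  apply: aeW => x _; apply: cvg_EFin; first exact: nearW.
  by rewrite indicE in_set1; exact: cvg_peak.
have peak_dom : (\forall x \ae rho, forall n, setT x ->
    (`|(EFin \o peak (harmonic n) t) x| <= (EFin \o cst 1%R) x)%E)%classic.
  by apply: aeW => x n _ /=; rewrite lee_fin ger0_norm ?peak_ge0 ?peak_le1.
have [_ _ cvg_int] := dominated_convergence measurableT
  (fun n => measurable_peak t (harmonic_neq0 n)) mf f_lim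
  (finite_measure_integrable_cst rho 1 measurableT) peak_dom.
rewrite /f integral_indic ?setIT in cvg_int; [|exact: measurableT|exact: measurable_set1].
have rho_t_fin : rho [set t] \is a fin_num by apply: fin_num_measure; exact: measurable_set1.
by apply: fine_cvg; rewrite fineK.
Qed.

Lemma peak_cauchy_atoms (T : finType) (beta c : T -> R) e t :
  - e * Im (cauchy_atoms beta c (t +i* e)) = \sum_x c x * peak e t (beta x).
Proof. by rewrite Im_cauchy_atoms /= !mulr_sumr; apply: eq_bigr => x _; rewrite /peak; ring. Qed.

Lemma mass_cauchy_atoms (T : finType) (rho : probability R R) (beta c : T -> R) :
  (forall z, 0 < Im z -> cauchy_transform rho z = cauchy_atoms beta c z) ->
  forall t, rho [set t] = (\sum_(x | beta x == t) c x)%:E.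
Proof.
move=> rhoE t; have rho_t_fin : rho [set t] \is a fin_num.
  by apply: fin_num_measure; exact: measurable_set1.
have peak_atoms n :
    Rintegral rho setT (peak (harmonic n) t) = \sum_x c x * peak (harmonic n) t (beta x).
  by rewrite Rintegral_peak ?gt_eqF ?harmonic_gt0 // rhoE ?harmonic_gt0 // peak_cauchy_atoms.
have cvg_atoms : Rintegral rho setT (peak (harmonic n) t) @[n --> \oo] -->
    \sum_(x | beta x == t) c x.
  under eq_cvg do rewrite peak_atoms.
  rewrite big_mkcond /=; apply: cvg_big => [|x _]; first exact: add_continuous.
  by rewrite -mulrb -mulr_natr; apply: cvgM; [exact: cvg_cst | exact: cvg_peak].
rewrite -(fineK rho_t_fin); congr EFin.
apply: (cvg_unique _ (@cvg_Rintegral_peak rho t) cvg_atoms); exact: Rhausdorff.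
Qed.

Lemma dirac_sum_cauchy_atoms N (rho : probability R R) (beta c : 'I_N -> R) :
  injective beta -> \sum_j c j = 1 ->
  (forall z, 0 < Im z -> cauchy_transform rho z = cauchy_atoms beta c z) ->
  is_dirac_sum rho beta c.
Proof.
move=> beta_inj c1 rhoE.
have mass j : rho [set beta j] = (c j)%:E.
  by rewrite (mass_cauchy_atoms rhoE) (big_pred1 j) // => i; exact: (inj_eq beta_inj).
have m_atom j : measurable [set beta j] by exact: measurable_set1.
pose B := \big[setU/set0]_(j < N) [set beta j].
have mB : measurable B by exact: bigsetU_measurable.
have rho_IB A : measurable A -> rho (A `&` B) = (\sum_j (c j)%:E * \d_(beta j) A)%E.
  move=> mA; rewrite /B (big_morph (setI A) (setIUr A) (setI0 A)).
  rewrite measure_semi_additive_ord //.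
  - apply: eq_bigr => j _; rewrite setI1 diracE.
    by case: (_ \in A); rewrite ?mass ?measure0 /= ?mulr1n ?mulr0n ?mule1 ?mule0.
  - by move=> j; exact: measurableI.
  - apply/trivIsetP => i j _ _ ij; apply/seteqP; split => // x [[_ ->] [_ /beta_inj eq_ij]].
    by rewrite eq_ij eqxx in ij.
  - by apply: bigsetU_measurable => j _; exact: measurableI.
have rho_B : rho B = 1%E.
  have := rho_IB setT measurableT; rewrite setTI => ->.
  by under eq_bigr do rewrite diracT mule1; rewrite sumEFin c1.
have rho_CB : rho (setT `\` B) = 0%E.
  have : (1 = rho (setT `\` B) + rho (setT `&` B))%E :=
    etrans (esym (probability_setT rho)) (measureDI rho measurableT mB).
  by rewrite setTI rho_B => one_eq; rewrite -(@addeK _ 1%E (rho (setT `\` B))) // -one_eq subee.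
move=> A mA; rewrite -rho_IB // (measureDI rho mA mB) [X in (X + _)%E](_ : _ = 0%E) ?add0e //.
apply/eqP; rewrite eq_le measure_ge0 andbT -rho_CB.
by apply: le_measure; rewrite ?inE; [exact: measurableD | exact: measurableD | apply: setSD].
Qed.

Lemma atomic_with_cauchy_atoms (T : finType) (rho : probability R R) (beta c : T -> R) :
  injective beta -> (forall x, c x != 0) -> \sum_x c x = 1 ->
  (forall z, 0 < Im z -> cauchy_transform rho z = cauchy_atoms beta c z) ->
  atomic_with rho #|T|.
Proof.
move=> beta_inj c_neq0 c1 rhoE.
pose e := @enum_val T T; have e_inj : injective e := @enum_val_inj T T.
have cE : \sum_j c (e j) = 1 by rewrite -c1 (big_enum_val (A := T)).
have rhoE' z : 0 < Im z -> cauchy_transform rho z = cauchy_atoms (beta \o e) (c \o e) z.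
  by move=> z0; rewrite rhoE // /cauchy_atoms (big_enum_val (A := T)).
have beta_e_inj : injective (beta \o e) by exact: inj_comp.
exists (beta \o e), (c \o e); split => //; split; last exact: dirac_sum_cauchy_atoms.
move=> j; have mass : rho [set beta (e j)] = (c (e j))%:E.
  by rewrite (mass_cauchy_atoms rhoE') (big_pred1 j) // => i; exact: (inj_eq beta_e_inj).
by rewrite lt0r c_neq0 -lee_fin -mass measure_ge0.
Qed.

End AtomRecovery.

Lemma cauchy_transform_monotone (R : realType) (mu nu rho : probability R R) z :
  is_monotone_convolution mu nu rho -> 0 < Im z ->
  cauchy_transform rho z = cauchy_transform mu (H_transform nu z).
Proof. by move=> conv z0; rewrite -[LHS]invrK -/(H_transform _ _) conv // invrK. Qed.

Theorem corollary3p3 (R : realType) (mu nu rho : probability R R) (m n : nat) :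
  atomic_with mu m -> atomic_with nu n ->
  is_monotone_convolution mu nu rho ->
  atomic_with rho (m * n).
Proof.
move=> [a [lam [a_inj [lam_gt0 muE]]]] [d [p [d_inj [p_gt0 nuE]]]] conv.
have n_gt0 : (0 < n)%N.
  case: n d p {d_inj p_gt0} nuE => // d p /dirac_sum_weights.
  by rewrite big_ord0 => /eqP; rewrite eq_sym oner_eq0.
have [beta [c [beta_inj c_neq0 c1 rhoE]]] :=
  cauchy_atoms_comp n_gt0 a_inj (fun k => lt0r_neq0 (lam_gt0 k)) d_inj p_gt0.
have -> : (m * n)%N = #|{: 'I_m * 'I_n}| by rewrite card_prod !card_ord.
apply: (atomic_with_cauchy_atoms beta_inj c_neq0).
  by rewrite c1 (dirac_sum_weights muE) (dirac_sum_weights nuE) mulr1.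
move=> z z0; have z_neq0 := lt0r_neq0 z0.
have Gnu : cauchy_transform nu z = cauchy_atoms d p z.
  by apply: (cauchy_transform_dirac_sum _ nuE) => // j; exact: ltW.
rewrite (cauchy_transform_monotone conv z0) /H_transform Gnu -rhoE //.
apply: (cauchy_transform_dirac_sum _ muE) => [k|]; first exact: ltW.
exact/Im_inv_neq0/(Im_cauchy_atoms_neq0 d (Ordinal n_gt0) p_gt0 z_neq0).
Qed.
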